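(* Let $\mu$ be an infinite cardinal, $C_\mu=\mu\times\mu$, and $W_\mu=\{(w,w')\in C_\mu^\omega : \text{there is no } i \text{ with } w_i<w_{i+1}\text{ and } w'_i<w'_{i+1}\}$ (where a word over $C_\mu$ is written as a pair of words $(w,w')$ over $\mu$). Then the set $\mathrm{Res}(W_\mu)$ of left quotients of $W_\mu$, ordered by inclusion, is a well-quasi-order.
   Context: For $u\in C^*$, the left quotient of $W\subseteq C^\omega$ by $u$ is $u^{-1}W=\{w\in C^\omega: uw\in W\}$; $\mathrm{Res}(W)$ is the set of all left quotients. A partially ordered set is a well-quasi-order if it is well-founded and has no infinite antichain. *)

From Stdlib Require Import List Arith.
Import ListNotations.

(** An infinite cardinal mu, presented (von Neumann style) as an initial
    ordinal: a type [T] with a strict well-order [lt] that is infinite and such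
    that no proper initial segment is equinumerous with (admits an injection
    of) the whole of [T]. *)
Definition strict_total_order {T : Type} (lt : T -> T -> Prop) : Prop :=
  (forall x, ~ lt x x) /\
  (forall x y z, lt x y -> lt y z -> lt x z) /\
  (forall x y, lt x y \/ x = y \/ lt y x).

Definition infinite_type (T : Type) : Prop :=
  exists f : nat -> T, forall m n, f m = f n -> m = n.

Definition is_infinite_cardinal (T : Type) (lt : T -> T -> Prop) : Prop :=
  strict_total_order lt /\
  well_founded lt /\
  infinite_type T /\
  (forall x : T, ~ exists f : T -> T,
       (forall y, lt (f y) x) /\ (forall y z, f y = f z -> y = z)).

Definition oword (A : Type) := nat -> A.

Definition oconcat {A : Type} (u : list A) (w : oword A) : oword A :=
  fun i => match nth_error u i with
           | Some a => a
           | None => w (i - length u)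
           end.

Definition left_quotient {A : Type} (u : list A) (W : oword A -> Prop)
  : oword A -> Prop :=
  fun w => W (oconcat u w).

Definition Res {A : Type} (W : oword A -> Prop) : (oword A -> Prop) -> Prop :=
  fun S => exists u : list A, S = left_quotient u W.

Definition set_incl {X : Type} (S S' : X -> Prop) : Prop :=
  forall x, S x -> S' x.

Definition wqo_incl {X : Type} (P : (X -> Prop) -> Prop) : Prop :=
  (~ exists f : nat -> (X -> Prop),
       (forall n, P (f n)) /\
       (forall n, set_incl (f (S n)) (f n) /\ ~ set_incl (f n) (f (S n)))) /\
  (~ exists f : nat -> (X -> Prop),
       (forall n, P (f n)) /\
       (forall m n, m <> n -> ~ set_incl (f m) (f n))).

Definition W_mu {T : Type} (lt : T -> T -> Prop) : oword (T * T) -> Prop :=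
  fun w => ~ exists i : nat,
      lt (fst (w i)) (fst (w (S i))) /\ lt (snd (w i)) (snd (w (S i))).

From Stdlib Require Import List Arith Lia Classical ClassicalEpsilon.
Import ListNotations.

(* An ascent is a letter followed by one that is larger in both coordinates.
   If u is nonempty and u^{-1} W_mu is nonempty (u has no ascent), a word w lies
   in u^{-1} W_mu iff w lies in W_mu and does not start with an ascent from the
   last letter of u. Hence a componentwise smaller last letter gives a larger
   quotient, while the quotient by the empty word, W_mu itself, contains every
   quotient. Dickson's lemma for the well-order mu x mu, applied to the last
   letters, then turns any sequence of quotients into one with an inclusion
   f_i <= f_j for some i < j, which excludes both infinite descending chains
   and infinite antichains. *)

Section WellFoundedSequences.
Variables (A : Type) (lt : A -> A -> Prop).
Hypothesis lt_wf : well_founded lt.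

Lemma wf_exists_minimal (P : A -> Prop) :
  (exists x, P x) -> exists x, P x /\ forall y, P y -> ~ lt y x.
Proof.
  intros [x0 Px0]. apply NNPP; intro no_min.
  enough (no_P : forall x, ~ P x) by exact (no_P x0 Px0).
  intro x; induction x as [x IH] using (well_founded_ind lt_wf); intro Px.
  apply no_min. exists x. split; [exact Px|].
  intros y Py Hyx. exact (IH y Hyx Py).
Qed.

Lemma wf_nondescending_subseq (a : nat -> A) :
  exists b : nat -> nat,
    (forall k, b k < b (S k)) /\ (forall k, ~ lt (a (b (S k))) (a (b k))).
Proof.
  assert (next_min : forall n, exists j, n < j /\ forall k, n < k -> ~ lt (a k) (a j)).
  { intro n.
    destruct (wf_exists_minimal (fun x => exists k, n < k /\ a k = x))
      as [x [[j [Hj <-]] Hmin]]; [eauto|].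
    exists j. split; [exact Hj|]. intros k Hk. apply Hmin. eauto. }
  destruct (choice _ next_min) as [next Hnext].
  exists (fun k => Nat.iter (S k) next 0). split.
  - intro k. apply Hnext.
  - intro k. simpl. set (m := Nat.iter k next 0).
    apply (proj2 (Hnext m)).
    pose proof (proj1 (Hnext m)). pose proof (proj1 (Hnext (next m))). lia.
Qed.

End WellFoundedSequences.

Lemma dickson_wf {A B : Type} (ltA : A -> A -> Prop) (ltB : B -> B -> Prop) :
  well_founded ltA -> well_founded ltB -> forall c : nat -> A * B,
  exists i j, i < j /\ ~ ltA (fst (c j)) (fst (c i)) /\ ~ ltB (snd (c j)) (snd (c i)).
Proof.
  intros ltA_wf ltB_wf c.
  destruct (wf_nondescending_subseq A ltA ltA_wf (fun n => fst (c n)))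
    as [b [b_incr b_nondesc]].
  destruct (wf_exists_minimal B ltB ltB_wf (fun y => exists k, snd (c (b k)) = y))
    as [y [[m <-] Hmin]]; [exists (snd (c (b 0))), 0; reflexivity|].
  exists (b m), (b (S m)). repeat split; [apply b_incr | apply b_nondesc |].
  apply Hmin. eauto.
Qed.

Section Concatenation.
Variable C : Type.

Lemma oconcat_lt (u : list C) w w' i :
  i < length u -> oconcat u w i = oconcat u w' i.
Proof.
  intro Hi. unfold oconcat. destruct (nth_error u i) eqn:E; [reflexivity|].
  apply nth_error_None in E. lia.
Qed.

Lemma oconcat_ge (u : list C) w i :
  length u <= i -> oconcat u w i = w (i - length u).
Proof. intro Hi. unfold oconcat. apply nth_error_None in Hi. now rewrite Hi. Qed.

Lemma oconcat_snoc_last (u : list C) a w : oconcat (u ++ [a]) w (length u) = a.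
Proof. unfold oconcat. now rewrite nth_error_app2, Nat.sub_diag by lia. Qed.

Lemma oconcat_snoc_next (u : list C) a w : oconcat (u ++ [a]) w (S (length u)) = w 0.
Proof.
  rewrite oconcat_ge by (rewrite length_app; simpl; lia).
  now rewrite length_app, Nat.add_1_r, Nat.sub_diag.
Qed.

End Concatenation.

Section Quotients.
Variables (T : Type) (lt : T -> T -> Prop).

Lemma W_mu_oconcat_suffix u w : W_mu lt (oconcat u w) -> W_mu lt w.
Proof.
  intros Hw [i Hi]. apply Hw. exists (length u + i).
  rewrite !oconcat_ge by lia.
  replace (length u + i - length u) with i by lia.
  now replace (S (length u + i) - length u) with (S i) by lia.
Qed.

Lemma left_quotient_W_mu_incl_nil u :
  set_incl (left_quotient u (W_mu lt)) (left_quotient [] (W_mu lt)).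
Proof.
  intros w Hw [i Hi]. apply (W_mu_oconcat_suffix u w Hw). exists i.
  now rewrite !oconcat_ge, !Nat.sub_0_r in Hi by (simpl; lia).
Qed.

Hypothesis lt_trans : forall x y z, lt x y -> lt y z -> lt x z.
Hypothesis lt_total : forall x y, lt x y \/ x = y \/ lt y x.

Lemma not_lt_lt_trans x y z : ~ lt y x -> lt y z -> lt x z.
Proof.
  intros Hyx Hyz. destruct (lt_total x y) as [Hxy|[<-|]]; [eauto|exact Hyz|contradiction].
Qed.

Lemma left_quotient_W_mu_incl_snoc u a v b :
  (exists w, left_quotient (v ++ [b]) (W_mu lt) w) ->
  ~ lt (fst b) (fst a) -> ~ lt (snd b) (snd a) ->
  set_incl (left_quotient (u ++ [a]) (W_mu lt)) (left_quotient (v ++ [b]) (W_mu lt)).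
Proof.
  unfold left_quotient. intros [w0 Hw0] Hb1 Hb2 w Hw [i Hi].
  assert (len_v : length (v ++ [b]) = S (length v)) by (rewrite length_app; simpl; lia).
  destruct (lt_eq_lt_dec i (length v)) as [[Hiv | ->] | Hvi].
    apply Hw0. exists i.
    rewrite !(oconcat_lt _ (v ++ [b]) w0 w) by lia. exact Hi.
  - (* the ascent goes from b to w 0, so there is one from a to w 0 *)
    apply Hw. exists (length u).
    rewrite oconcat_snoc_last, oconcat_snoc_next in Hi |- *.
    destruct Hi as [Hi1 Hi2]. split; eapply not_lt_lt_trans; eassumption.
  - apply Hw. exists (length u + (i - length v)).
    assert (len_u : length (u ++ [a]) = S (length u)) by (rewrite length_app; simpl; lia).
    rewrite !oconcat_ge in Hi |- * by lia. rewrite len_u. rewrite len_v in Hi.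
    replace (length u + (i - length v) - S (length u)) with (i - S (length v)) by lia.
    now replace (S (length u + (i - length v)) - S (length u)) with (S i - S (length v))
      by lia.
Qed.

Hypothesis lt_wf : well_founded lt.

Lemma Res_W_mu_good (f : nat -> (oword (T * T) -> Prop)) :
  (forall n, Res (W_mu lt) (f n)) -> exists i j, i < j /\ set_incl (f i) (f j).
Proof.
  intro Hf.
  destruct (choice (fun n u => f n = left_quotient u (W_mu lt)) Hf) as [u Hu].
  destruct (classic (exists j, 0 < j /\ u j = [])) as [[j [Hj Hnil]] | Hcons].
  { exists 0, j. split; [exact Hj|].
    rewrite (Hu 0), (Hu j), Hnil. apply left_quotient_W_mu_incl_nil. }
  destruct (choice (fun n p => u (S n) = fst p ++ [snd p])) as [split_last Hsplit].
  { intro n. destruct (exists_last (l := u (S n))) as [v [a E]].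
    - intro E. apply Hcons. exists (S n). split; [lia | exact E].
    - now exists (v, a). }
  destruct (dickson_wf lt lt lt_wf lt_wf (fun n => snd (split_last n)))
    as [i [j [Hij [H1 H2]]]].
  destruct (classic (exists w, f (S j) w)) as [[w0 Hw0] | Hempty].
  - exists (S i), (S j). split; [lia|].
    rewrite (Hu (S j)), Hsplit in Hw0 |- *. rewrite (Hu (S i)), Hsplit.
    apply left_quotient_W_mu_incl_snoc; eauto.
  - exists (S j), (S (S j)). split; [lia|].
    intros w Hw. exfalso. eauto.
Qed.

End Quotients.

Lemma wqo_incl_of_good {X : Type} (P : (X -> Prop) -> Prop) :
  (forall f, (forall n, P (f n)) -> exists i j, i < j /\ set_incl (f i) (f j)) ->
  wqo_incl P.
Proof.
  intro good. split.
  - intros [f [Pf Hdesc]]. destruct (good f Pf) as [i [j [Hij Hincl]]].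
    assert (Hchain : forall k, S i <= k -> set_incl (f k) (f (S i))).
    { intros k Hk. induction Hk as [|k Hk IH]; intros x Hx; [exact Hx|].
      apply IH, (proj1 (Hdesc k)), Hx. }
    apply (proj2 (Hdesc i)). intros x Hx. apply (Hchain j Hij), Hincl, Hx.
  - intros [f [Pf Hanti]]. destruct (good f Pf) as [i [j [Hij Hincl]]].
    exact (Hanti i j ltac:(lia) Hincl).
Qed.

Theorem lemma5p3 (T : Type) (lt : T -> T -> Prop) :
  is_infinite_cardinal T lt -> wqo_incl (Res (W_mu lt)).
Proof.
  intros [[_ [lt_trans lt_total]] [lt_wf _]].
  apply wqo_incl_of_good.
  exact (Res_W_mu_good T lt lt_trans lt_total lt_wf).
Qed.
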